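(* Let us consider a fragment, $F$, that entered the work state for two consecutive times, $i$ and $i+1$ and remained active. Let $t_{i}$ be the time it entered the work state for the $i$-th time, and let $t_{i+1}$ be the $i+1$ time. Let us define by $k_i$ its known size at time $t_i$, and by size $k_{i+1}$ its size at time $t_{i+1}$+ countdelay. Then, $k_{i+1} \geq X^2 \cdot k_{i}$.
   Context: A broadcast network is modeled as a connected graph G(V,E) with n nodes. In the fragment-level leader election algorithm, nodes are partitioned into fragments each with a candidate; id(F) = (size, candidate identity) ordered lexicographically (by size, then identity); an external edge between F1 and F2 with id(F1) > id(F2) is outgoing for F1 and incoming for F2. Initially each node is a size-1 fragment in state wait. A fragment with an outgoing edge is in wait; a fragment in wait whose external edges are all incoming moves to work, where during a delay countdelay it counts its current size new_size, and compares with its maximal neighbor F': if new_size > X · size(F') (X > 1 a parameter) it remains active, updates its size, makes all external edges outgoing and returns to wait; otherwise it joins F'. A fragment with no external edges is the leader. It has been shown that a fragment that was in work and remained active re-enters work only after each of its neighboring fragments has been in the work state. *)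

(* An explicit (interleaving, discrete-time) operational model
   of the fragment-level leader election algorithm. *)
From mathcomp Require Import all_boot all_order all_algebra.
Import Order.TTheory GRing.Theory Num.Theory.
Set Implicit Arguments. Unset Strict Implicit. Unset Printing Implicit Defensive.
Local Open Scope ring_scope.

(* State of a candidate (= of the fragment it heads). [Work t0]: entered the
   work state at time t0.  [Absorbed]: the fragment joined another one. *)
Inductive status := Wait | Work of nat | Leader | Absorbed.

(* Global state: [frag v] = candidate of the fragment of node v;
   [ksz c] = known size of the fragment with candidate c; [st c] its state. *)
Record state (T : Type) := State {
  frag : T -> T;
  ksz : T -> nat;
  st : T -> status }.

Section Alg.
Variables (T : finType) (e : rel T) (uid : T -> nat) (R : realFieldType)
          (X : R) (countdelay : nat).

Definition init : state T := State id (fun _ => 1%N) (fun _ => Wait).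

Definition cand (s : state T) c := frag s c == c.
(* the nodes currently in the fragment of candidate c (actual size = #|.|) *)
Definition members (s : state T) c := [set v | frag s v == c].

Definition idlt (s : state T) c d :=
  (ksz s c < ksz s d)%N || ((ksz s c == ksz s d) && (uid c < uid d)%N).

Definition nbr (s : state T) c d :=
  (d != c) && [exists u, exists v, [&& frag s u == c, frag s v == d & e u v]].
Definition has_ext (s : state T) c := [exists d, nbr s c d].
(* all external edges of c are incoming, i.e. every neighbour has larger id *)
Definition all_incoming (s : state T) c := [forall d, nbr s c d ==> idlt s c d].
Definition is_max_nbr (s : state T) c d :=
  nbr s c d && [forall d', (nbr s c d' && (d' != d)) ==> idlt s d' d].

Definition no_deadline (s : state T) n :=
  forall c t0, cand s c -> st s c = Work t0 -> (t0 + countdelay)%N <> n.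

Definition set_st (s : state T) c x :=
  State (frag s) (ksz s) (fun y => if y == c then x else st s y).
(* remain active: update size, make all edges outgoing, return to wait *)
Definition grow (s : state T) c k :=
  State (frag s) (fun y => if y == c then k else ksz s y)
        (fun y => if y == c then Wait else st s y).
Definition absorb (s : state T) c d :=
  State (fun v => if frag s v == c then d else frag s v) (ksz s)
        (fun y => if y == c then Absorbed else st s y).

Inductive step (n : nat) (s s' : state T) : Prop :=
| StepIdle : no_deadline s n -> s' = s -> step n s s'
| StepEnter c : no_deadline s n -> cand s c -> st s c = Wait ->
    has_ext s c -> all_incoming s c -> s' = set_st s c (Work n) -> step n s s'
| StepGrow c t0 d : cand s c -> st s c = Work t0 -> (t0 + countdelay)%N = n ->
    is_max_nbr s c d ->
    X * (ksz s d)%:R < (#|members s c|)%:R ->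
    s' = grow s c #|members s c| -> step n s s'
| StepJoin c t0 d : cand s c -> st s c = Work t0 -> (t0 + countdelay)%N = n ->
    is_max_nbr s c d ->
    ~~ (X * (ksz s d)%:R < (#|members s c|)%:R) ->
    s' = absorb s c d -> step n s s'
| StepLeader c t0 : cand s c -> st s c = Work t0 -> (t0 + countdelay)%N = n ->
    ~~ has_ext s c -> s' = set_st s c Leader -> step n s s'.

Definition execution (s : nat -> state T) :=
  s 0%N = init /\ forall n, step n (s n) (s n.+1).

Definition enters_work (s : nat -> state T) c t :=
  [/\ cand (s t) c, st (s t) c = Wait & st (s t.+1) c = Work t].

(* after the work phase started at t (decision at t + countdelay), c remained
   active: it is still a candidate and back in wait *)
Definition stays_active (s : nat -> state T) c t :=
  cand (s (t + countdelay).+1) c /\ st (s (t + countdelay).+1) c = Wait.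

End Alg.

(* A fragment that works is a candidate all of whose external edges are
   incoming; this invariant survives every step, because two working fragments
   are never neighbours.  Hence at the end of a work phase the maximal neighbour
   d of F has known size at least that of F, and remaining active means
   new_size > X * size(d) >= X * k_i; the new size becomes the known size.
   Between two work phases F waits and its known size does not change, so the
   second phase gives k_(i+1) > X * (known size) > X^2 * k_i. *)
From mathcomp Require Import all_boot all_order all_algebra zify.
Import Order.TTheory GRing.Theory Num.Theory.
Set Implicit Arguments. Unset Strict Implicit. Unset Printing Implicit Defensive.
Local Open Scope ring_scope.

Section FragmentElection.
Variables (T : finType) (e : rel T) (uid : T -> nat) (R : realFieldType)
          (X : R) (cd : nat).

Lemma idlt_asym (s : state T) a b : idlt uid s a b -> ~~ idlt uid s b a.
Proof. rewrite /idlt; lia. Qed.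

Lemma idlt_leq_ksz (s : state T) a b : idlt uid s a b -> (ksz s a <= ksz s b)%N.
Proof. rewrite /idlt; lia. Qed.

Lemma nbr_sym (s : state T) a b : symmetric e -> nbr e s a b -> nbr e s b a.
Proof.
move=> esym /andP[ne /existsP[u /existsP[v /and3P[hu hv huv]]]].
rewrite /nbr eq_sym ne; apply/existsP; exists v; apply/existsP; exists u.
by rewrite hu hv esym.
Qed.

Definition work_incoming (s : state T) := forall c t0, st s c = Work t0 ->
  cand s c /\ forall d, nbr e s c d -> idlt uid s c d.

Lemma work_not_nbr (s : state T) c c' t t' : symmetric e -> work_incoming s ->
  st s c = Work t -> st s c' = Work t' -> ~~ nbr e s c c'.
Proof.
move=> esym inv /inv[_ inc] /inv[_ inc']; apply/negP=> cc'.
by move: (idlt_asym (inc _ cc')); rewrite inc' // nbr_sym.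
Qed.

Lemma nbr_absorb (s : state T) c0 d c x : c != d -> ~~ nbr e s c c0 ->
  nbr e (absorb s c0 d) c x -> nbr e s c x.
Proof.
move=> neq_cd ncc0 /andP[xc /existsP[u /existsP[v /and3P[/= hu hv uv]]]].
move: hu hv; case: (eqVneq (frag s u) c0) => [_ /eqP dc|uc0 uc].
  by rewrite dc eqxx in neq_cd.
case: (eqVneq (frag s v) c0) => [vc0 _|_ vx].
  move: ncc0; rewrite /nbr -(eqP uc) eq_sym uc0 /=.
  by case/existsP; exists u; apply/existsP; exists v; rewrite vc0 !eqxx uv.
by rewrite /nbr xc; apply/existsP; exists u; apply/existsP; exists v; rewrite uc vx.
Qed.

Lemma work_incoming_step n s s' : symmetric e -> work_incoming s ->
  step e uid X cd n s s' -> work_incoming s'.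
Proof.
move=> esym inv; case=> [_ ->|c0 _ cand0 _ _ inc0 ->|c0 t0 d _ w0 _ _ _ ->|
                          c0 t0 d _ w0 _ max0 _ ->|c0 t0 _ _ _ _ ->] // c t /=;
  case: eqP => [-> //|cc0 wc]; try exact: inv wc.
- by split=> // d; move/forallP/(_ d)/implyP: inc0.
- have [cand_c inc] := inv _ _ wc; split=> // x cx.
  have xc0 : x != c0 by apply: contraNneq (work_not_nbr esym inv wc w0) => <-.
  by move: (inc _ cx); rewrite /idlt /= (negbTE xc0) (introF eqP cc0).
- have [cand_c inc] := inv _ _ wc.
  have ncc0 := work_not_nbr esym inv wc w0.
  have neq_cd : c != d.
    by apply: contraNneq ncc0 => ->; apply: nbr_sym; case/andP: max0.
  split=> [|x /(nbr_absorb neq_cd ncc0)/inc //].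
  by rewrite /cand /= (eqP cand_c) (introF eqP cc0).
Qed.

Lemma execution_work_incoming s : symmetric e -> execution e uid X cd s ->
  forall n, work_incoming (s n).
Proof.
move=> esym [s0 steps]; elim=> [|n IHn]; first by rewrite s0.
exact: work_incoming_step (steps n).
Qed.

Lemma step_work_frame n s s' c t0 : step e uid X cd n s s' ->
  cand s c -> st s c = Work t0 -> n <> (t0 + cd)%N ->
  [/\ cand s' c, st s' c = Work t0 & ksz s' c = ksz s c].
Proof.
move=> stp cand_c wc deadline; case: stp
  => [_ ->|c0 _ _ w0 _ _ ->|c0 t d _ w0 end0 _ _ ->|c0 t d _ w0 end0 _ _ ->|
      c0 t _ w0 end0 _ ->] /=; first by split.
all: case: (eqVneq c c0) => [ec|cc0];
  first by rewrite -ec wc in w0; by [case: w0 | case: w0 end0 => <- /esym].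
all: try by split.
by rewrite /cand /= (eqP cand_c) (negbTE cc0).
Qed.

Lemma step_wait_frame n s s' c : step e uid X cd n s s' ->
  cand s c -> st s c = Wait ->
  [/\ cand s' c, st s' c = Wait \/ st s' c = Work n & ksz s' c = ksz s c].
Proof.
move=> stp cand_c wc; case: stp
  => [_ ->|c0 _ _ _ _ _ ->|c0 t d _ w0 _ _ _ ->|c0 t d _ w0 _ _ _ ->|
      c0 t _ w0 _ _ ->] /=; first by split=> //; left.
all: case: (eqVneq c c0) => [ec|cc0];
  first by [split=> //; right | rewrite -ec wc in w0].
all: try by split=> //; left.
by rewrite /cand /= (eqP cand_c) (negbTE cc0); split=> //; left.
Qed.

Lemma step_deadline_grow n s s' c t0 : step e uid X cd n s s' ->
  cand s c -> st s c = Work t0 -> (t0 + cd)%N = n -> st s' c = Wait ->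
  exists2 d, nbr e s c d &
    X * (ksz s d)%:R < (#|members s c|)%:R /\ ksz s' c = #|members s c|.
Proof.
move=> stp cand_c wc deadline; case: stp
  => [_ ->|c0 nod _ _ _ _ ->|c0 t d _ w0 _ max0 grows ->|c0 t d _ w0 _ _ _ ->|
      c0 t _ w0 _ _ ->] /=; rewrite ?wc //; first by case: (nod c t0).
all: case: eqP => [-> //= _|_ //].
by exists d; first by case/andP: max0.
Qed.

Lemma work_phase_frame s c t j : execution e uid X cd s ->
  enters_work s c t -> (0 < j <= cd)%N ->
  [/\ cand (s (t + j)%N) c, st (s (t + j)%N) c = Work t
     & ksz (s (t + j)%N) c = ksz (s t) c].
Proof.
move=> [_ steps] [cand_c wait_c work_c]; elim: j => [//|[_ _|j IHj]].
  by rewrite addn1; have [? _ ->] := step_wait_frame (steps t) cand_c wait_c.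
move=> /andP[_ lej]; have [cand_j work_j ksz_j] := IHj (ltnW lej).
rewrite addnS; have [|? ? ->] := step_work_frame (steps _) cand_j work_j.
  by lia.
by split.
Qed.

Lemma wait_phase_frame s c a b : execution e uid X cd s ->
  cand (s a) c -> st (s a) c = Wait -> (a <= b)%N ->
  (forall t, (a <= t < b)%N -> ~ enters_work s c t) ->
  [/\ cand (s b) c, st (s b) c = Wait & ksz (s b) c = ksz (s a) c].
Proof.
move=> [_ steps] cand_a wait_a ab; move: (b - a)%N (subnKC ab) => j <- {b ab}.
elim: j => [|j IHj] idle; first by rewrite addn0.
have [|cand_j wait_j ksz_j] := IHj; first by move=> t ?; apply: idle; lia.
rewrite addnS; have [? [?|work_j] ->] := step_wait_frame (steps _) cand_j wait_j.
  by split.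
by case: (idle (a + j)%N); [lia|].
Qed.

Lemma enters_work_after_deadline s c t1 t2 : execution e uid X cd s ->
  enters_work s c t1 -> enters_work s c t2 -> (t1 < t2)%N -> (t1 + cd < t2)%N.
Proof.
move=> ex E1 [_ wait2 _] lt12; rewrite ltnNge; apply/negP=> le21.
have [|_ work2 _] := work_phase_frame (j := (t2 - t1)%N) ex E1; first by lia.
by rewrite subnKC ?wait2 // ltnW in work2.
Qed.

Lemma stays_active_growth s c t : symmetric e -> 0 <= X -> (0 < cd)%N ->
  execution e uid X cd s -> enters_work s c t -> stays_active cd s c t ->
  X * (ksz (s t) c)%:R < (#|members (s (t + cd)%N) c|)%:R /\
  ksz (s (t + cd).+1) c = #|members (s (t + cd)%N) c|.
Proof.
move=> esym X0 cd0 ex E [_ wait_after].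
have [|cand_c work_c ksz_c] := work_phase_frame (j := cd) ex E.
  by rewrite cd0 leqnn.
have [d nbr_cd [grows ->]] :=
  step_deadline_grow (ex.2 _) cand_c work_c erefl wait_after.
split=> //; apply: le_lt_trans grows; rewrite -ksz_c ler_wpM2l // ler_nat.
have [_ incoming] := execution_work_incoming esym ex work_c.
exact/idlt_leq_ksz/incoming.
Qed.

End FragmentElection.

Theorem lemma4 (T : finType) (e : rel T) (uid : T -> nat) (R : realFieldType)
    (X : R) (countdelay : nat) (s : nat -> state T) (c : T) (t1 t2 : nat) :
  symmetric e -> irreflexive e -> (forall u v, connect e u v) ->
  injective uid -> 1 < X -> (0 < countdelay)%N ->
  execution e uid X countdelay s ->
  enters_work s c t1 -> stays_active countdelay s c t1 ->
  enters_work s c t2 -> stays_active countdelay s c t2 ->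
  (t1 < t2)%N -> (forall t, (t1 < t < t2)%N -> ~ enters_work s c t) ->
  X ^+ 2 * (ksz (s t1) c)%:R <= (#|members (s (t2 + countdelay)%N) c|)%:R.
Proof.
move=> esym _ _ _ X1 cd0 ex E1 A1 E2 A2 lt12 idle.
have X0 : 0 <= X by rewrite ltW // (lt_trans ltr01).
have [grow1 ksz1] := stays_active_growth esym X0 cd0 ex E1 A1.
have [grow2 _] := stays_active_growth esym X0 cd0 ex E2 A2.
have gap := enters_work_after_deadline ex E1 E2 lt12.
have [|_ _ ksz2] := wait_phase_frame ex A1.1 A1.2 gap.
  by move=> t range; apply: idle; lia.
rewrite ksz1 in ksz2; apply/ltW/(le_lt_trans _ grow2).
by rewrite expr2 -mulrA ksz2 ler_wpM2l // ltW.
Qed.
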